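(* Let $n\ge 4$ and for each $i\in[n]$ let $X_i$ be uniformly distributed on $[0,i]$, with arbitrary joint distribution. Then $$ \mathbb{E}\Big[\max\Big\{|A|: A\subset[n],\ \sum_{i\in A}X_i\le 1\Big\}\Big]\le (2H_n)^{1/2}, $$ where $H_n=\sum_{i=1}^n 1/i$ is the $n$-th harmonic number. *)

From Stdlib Require Import Reals Lra List.
Import ListNotations.
Open Scope R_scope.

Definition sigma_algebra {Omega : Type} (F : (Omega -> Prop) -> Prop) : Prop :=
  F (fun _ => True) /\
  (forall A, F A -> F (fun w => ~ A w)) /\
  (forall A : nat -> Omega -> Prop,
      (forall k, F (A k)) -> F (fun w => exists k, A k w)).

Definition prob_space {Omega : Type} (F : (Omega -> Prop) -> Prop)
    (P : (Omega -> Prop) -> R) : Prop :=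
  sigma_algebra F /\
  (forall A, F A -> 0 <= P A) /\
  P (fun _ => True) = 1 /\
  (forall A : nat -> Omega -> Prop,
      (forall k, F (A k)) ->
      (forall j k, j <> k -> forall w, A j w -> A k w -> False) ->
      Un_cv (fun N => sum_f_R0 (fun k => P (A k)) N)
            (P (fun w => exists k, A k w))).

Definition uniform_on {Omega : Type} (F : (Omega -> Prop) -> Prop)
    (P : (Omega -> Prop) -> R) (X : Omega -> R) (a : R) : Prop :=
  forall t : R,
    F (fun w => X w <= t) /\
    P (fun w => X w <= t) = Rmin 1 (Rmax 0 (t / a)).

Definition subset_of_range (n : nat) (A : list nat) : Prop :=
  NoDup A /\ (forall i, In i A -> (1 <= i <= n)%nat).

Definition sum_over {Omega : Type} (X : nat -> Omega -> R) (A : list nat)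
    (w : Omega) : R :=
  fold_right (fun i s => X i w + s) 0 A.

Definition max_card_ge {Omega : Type} (n : nat) (X : nat -> Omega -> R)
    (k : nat) (w : Omega) : Prop :=
  exists A, subset_of_range n A /\ length A = k /\ sum_over X A w <= 1.

Definition max_card_eq {Omega : Type} (n : nat) (X : nat -> Omega -> R)
    (k : nat) (w : Omega) : Prop :=
  max_card_ge n X k w /\ ~ max_card_ge n X (S k) w.

(* Expectation of the {0..n}-valued random variable max{|A| : ...}:
   sum_{k=0}^{n} k * P(max = k). *)
Definition expected_max_card {Omega : Type} (P : (Omega -> Prop) -> R)
    (n : nat) (X : nat -> Omega -> R) : R :=
  sum_f_R0 (fun k => INR k * P (max_card_eq n X k)) n.

Definition harmonic (n : nat) : R :=
  sum_f_R0 (fun j => / INR (S j)) (pred n).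

From Stdlib Require Import Reals Lra Lia List ZArith.
From Stdlib Require Import Classical ClassicalEpsilon FunctionalExtensionality PropExtensionality.
Import ListNotations.
Open Scope R_scope.

(* Let c = sqrt(H_n / 2); then c >= 1 because H_4 > 2.  For x > 0 one has
   1 <= (1 - c x)_+ + c x, so whenever the X_i with i in A sum to at most 1,
   |A| <= c + sum_{i=1}^n (1 - c X_i)_+.  As E (1 - c X_i)_+ = 1/(2 c i), the expected
   maximum is at most c + H_n/(2c) = sqrt(2 H_n).  Only events carry a probability here,
   so (1 - c x)_+ is replaced by an N-step staircase above it, whose expectation exceeds
   1/(2 c i) by a factor (N + 1)/N, and N is then sent to infinity. *)

Lemma pred_ext {Omega : Type} (A B : Omega -> Prop) :
  (forall w, A w <-> B w) -> A = B.
Proof.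
  intro H; apply functional_extensionality; intro w.
  apply propositional_extensionality; apply H.
Qed.

Section Events.

Context {Omega : Type} {F : (Omega -> Prop) -> Prop} (HF : sigma_algebra F).

Lemma event_ext (A : Omega -> Prop) {B : Omega -> Prop} :
  F A -> (forall w, A w <-> B w) -> F B.
Proof. intros HA H; rewrite <- (pred_ext A B H); exact HA. Qed.

Lemma event_True : F (fun _ => True).
Proof. exact (proj1 HF). Qed.

Lemma event_compl {A : Omega -> Prop} : F A -> F (fun w => ~ A w).
Proof. exact (proj1 (proj2 HF) A). Qed.

Lemma event_False : F (fun _ => False).
Proof. apply (event_ext (fun w => ~ True)); [apply event_compl, event_True | tauto]. Qed.

Lemma event_ex {A : nat -> Omega -> Prop} :
  (forall k, F (A k)) -> F (fun w => exists k, A k w).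
Proof. exact (proj2 (proj2 HF) A). Qed.

Lemma event_or {A B : Omega -> Prop} : F A -> F B -> F (fun w => A w \/ B w).
Proof.
  intros HA HB.
  apply (event_ext (fun w => exists k, (match k with 0 => A | _ => B end) w)).
  - apply event_ex; intros [|k]; auto.
  - intro w; split.
    + intros [[|k] H]; auto.
    + intros [H|H]; [exists 0%nat | exists 1%nat]; auto.
Qed.

Lemma event_and {A B : Omega -> Prop} : F A -> F B -> F (fun w => A w /\ B w).
Proof.
  intros HA HB; apply (event_ext (fun w => ~ (~ A w \/ ~ B w))).
  - apply event_compl, event_or; apply event_compl; auto.
  - intro w; tauto.
Qed.

Lemma event_all {A : nat -> Omega -> Prop} :
  (forall k, F (A k)) -> F (fun w => forall k, A k w).
Proof.
  intro HA; apply (event_ext (fun w => ~ exists k, ~ A k w)).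
  - apply event_compl, event_ex; intro k; apply event_compl; auto.
  - intro w; split.
    + intros H k; apply NNPP; intro H'; apply H; eauto.
    + intros H [k Hk]; auto.
Qed.

Lemma event_guard (Q : Prop) {A : Omega -> Prop} : (Q -> F A) -> F (fun w => Q /\ A w).
Proof.
  intro H; destruct (classic Q) as [q|q].
  - apply (event_ext A); auto; intro w; tauto.
  - apply (event_ext (fun _ => False)); [apply event_False | intro w; tauto].
Qed.

End Events.

Section Probability.

Context {Omega : Type} {F : (Omega -> Prop) -> Prop} {P : (Omega -> Prop) -> R}
  (HP : prob_space F P).

Let HF : sigma_algebra F := proj1 HP.

Lemma prob_ge0 {A : Omega -> Prop} : F A -> 0 <= P A.
Proof. exact (proj1 (proj2 HP) A). Qed.

(* The constant empty family is disjoint, so the partial sums (N + 1) P(empty) converge. *)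
Lemma prob_False : P (fun _ => False) = 0.
Proof.
  pose proof HP as (_&_&_&Hadd).
  set (p := P (fun _ => False)).
  assert (Hc := Hadd (fun _ _ => False) (fun _ => event_False HF) (fun j k _ w a b => a)).
  cbv beta in Hc.
  rewrite (pred_ext (fun w => exists _ : nat, False) (fun _ => False)) in Hc
    by (intro w; split; [intros [_ f]; exact f | tauto]).
  fold p in Hc.
  assert (Hs : forall N, sum_f_R0 (fun _ => p) N = INR (S N) * p).
  { induction N; [simpl; ring|]. rewrite tech5, IHN, (S_INR (S N)); ring. }
  destruct (Req_dec p 0) as [|Hp]; auto; exfalso.
  assert (Hap : 0 < Rabs p) by (apply Rabs_pos_lt; auto).
  destruct (Hc (Rabs p / 2)) as [N HN]; [lra|].
  specialize (HN (S N) ltac:(lia)); unfold Rdist in HN; rewrite Hs in HN.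
  replace (INR (S (S N)) * p - p) with (INR (S N) * p) in HN
    by (rewrite (S_INR (S N)); ring).
  rewrite Rabs_mult, Rabs_right in HN by (apply Rle_ge, pos_INR).
  rewrite S_INR in HN; pose proof (pos_INR N); nra.
Qed.

Lemma prob_split {G D : Omega -> Prop} :
  F G -> F D -> P G = P (fun w => G w /\ D w) + P (fun w => G w /\ ~ D w).
Proof.
  intros HG HD; pose proof HP as (_&_&_&Hadd).
  set (A := fun k w => match k with
                       | 0%nat => G w /\ D w | 1%nat => G w /\ ~ D w | _ => False end).
  assert (HA : forall k, F (A k)).
  { intros [|[|k]]; unfold A.
    - apply event_and; auto.
    - apply event_and, event_compl; auto.
    - apply event_False; auto. }
  assert (Hd : forall j k, j <> k -> forall w, A j w -> A k w -> False).
  { intros [|[|j]] [|[|k]] Hjk w; unfold A; simpl; try tauto; lia. }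
  assert (Hc := Hadd A HA Hd).
  rewrite (pred_ext (fun w => exists k, A k w) G) in Hc.
  2:{ intro w; split.
      - intros [[|[|k]] Hk]; unfold A in Hk; tauto.
      - intro g; destruct (classic (D w));
          [exists 0%nat | exists 1%nat]; unfold A; tauto. }
  assert (Hs : forall N, sum_f_R0 (fun k => P (A k)) (S N) = P (A 0%nat) + P (A 1%nat)).
  { induction N; [simpl; ring|]. rewrite tech5, IHN; unfold A at 3; rewrite prob_False; ring. }
  symmetry; apply (UL_sequence (fun N => sum_f_R0 (fun k => P (A k)) N)); auto.
  intros eps Heps; exists 1%nat; intros [|m] Hm; [lia|].
  rewrite Hs; unfold Rdist, A; rewrite Rminus_diag, Rabs_R0; auto.
Qed.

Lemma prob_and_le {A B : Omega -> Prop} : F A -> F B -> P (fun w => A w /\ B w) <= P A.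
Proof.
  intros HA HB; rewrite (prob_split HA HB).
  pose proof (prob_ge0 (event_and HF HA (event_compl HF HB))); lra.
Qed.

Lemma prob_or_le {A B : Omega -> Prop} : F A -> F B -> P (fun w => A w \/ B w) <= P A + P B.
Proof.
  intros HA HB; rewrite (prob_split (event_or HF HA HB) HA).
  rewrite (pred_ext (fun w => (A w \/ B w) /\ A w) A) by (intro; tauto).
  rewrite (pred_ext (fun w => (A w \/ B w) /\ ~ A w) (fun w => B w /\ ~ A w)) by (intro; tauto).
  pose proof (prob_and_le HB (event_compl HF HA)); lra.
Qed.

Lemma prob_and_as {E G : Omega -> Prop} :
  F E -> F G -> P (fun w => ~ G w) = 0 -> P (fun w => E w /\ G w) = P E.
Proof.
  intros HE HG H0; rewrite (prob_split HE HG).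
  rewrite (pred_ext (fun w => E w /\ ~ G w) (fun w => ~ G w /\ E w)) by (intro; tauto).
  pose proof (prob_ge0 (event_and HF (event_compl HF HG) HE)).
  pose proof (prob_and_le (event_compl HF HG) HE); lra.
Qed.

End Probability.

Definition measurable {Omega : Type} (F : (Omega -> Prop) -> Prop) (f : Omega -> R) : Prop :=
  forall t, F (fun w => f w <= t).

Lemma int_in_interval (r : R) : exists k : nat,
  (r < INR k <= r + 1) \/ (r < - INR k <= r + 1).
Proof.
  destruct (archimed r) as [H1 H2].
  destruct (Z_le_gt_dec 0 (up r)) as [Hz|Hz].
  - exists (Z.to_nat (up r)); left.
    rewrite INR_IZR_INZ, Z2Nat.id by auto; lra.
  - exists (Z.to_nat (- up r)); right.
    rewrite INR_IZR_INZ, Z2Nat.id, opp_IZR by lia; lra.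
Qed.

Section Measurability.

Context {Omega : Type} {F : (Omega -> Prop) -> Prop} (HF : sigma_algebra F).

Lemma measurable_const (c : R) : measurable F (fun _ => c).
Proof.
  intro t; destruct (Rle_dec c t).
  - apply (event_ext (fun _ => True)); [apply event_True; auto | intro; tauto].
  - apply (event_ext (fun _ => False)); [apply event_False; auto | intro; tauto].
Qed.

Lemma event_mulr_le {f : Omega -> R} (a s : R) :
  measurable F f -> 0 < a -> F (fun w => f w * a <= s).
Proof.
  intros Hf Ha; apply (event_ext (fun w => f w <= s / a)); auto.
  intro w; split; intro H.
  - apply Rmult_le_compat_r with (r := a) in H; [|lra].
    replace (s / a * a) with s in H by (field; lra); exact H.
  - apply Rmult_le_reg_r with a; auto.
    replace (s / a * a) with s by (field; lra); exact H.
Qed.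

(* f + g <= t iff for every scale a_N = N + 1 some integer q separates
   f a_N <= q from g a_N <= t a_N - q + 1; the integers are enumerated as k and -k. *)
Lemma measurable_plus {f g : Omega -> R} :
  measurable F f -> measurable F g -> measurable F (fun w => f w + g w).
Proof.
  intros Hf Hg t.
  set (a := fun N : nat => INR N + 1).
  assert (Ha : forall N, 0 < a N) by (intro N; unfold a; pose proof (pos_INR N); lra).
  apply (event_ext (fun w => forall N, exists k,
     (f w * a N <= INR k /\ g w * a N <= t * a N - INR k + 1) \/
     (f w * a N <= - INR k /\ g w * a N <= t * a N + INR k + 1))).
  - apply event_all; auto; intro N; apply event_ex; auto; intro k.
    apply event_or; auto; apply event_and; auto; apply event_mulr_le; auto.
  - intro w; split.
    + intro H; apply Rnot_lt_le; intro Hlt.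
      destruct (INR_unbounded (/ (f w + g w - t))) as [N HN].
      destruct (H N) as [k Hk].
      assert (Hsum : (f w + g w) * a N <= t * a N + 1) by (destruct Hk; nra).
      assert (INR N * (f w + g w - t) > 1).
      { apply Rmult_gt_compat_r with (r := f w + g w - t) in HN; [|lra].
        rewrite Rinv_l in HN by lra; lra. }
      unfold a in Hsum; nra.
    + intros H N; destruct (int_in_interval (f w * a N)) as [k Hk].
      assert (g w * a N <= t * a N - f w * a N) by (pose proof (Ha N); nra).
      exists k; destruct Hk as [Hk|Hk]; [left|right]; lra.
Qed.

Context {n : nat} {X : nat -> Omega -> R}
  (HX : forall i, (1 <= i <= n)%nat -> measurable F (X i)).

Lemma event_exists_list_sum_le (k : nat) :
  forall (Q : list nat -> Prop) (f : Omega -> R), measurable F f ->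
  (forall A, Q A -> length A = k /\ forall i, In i A -> (1 <= i <= n)%nat) ->
  F (fun w => exists A, Q A /\ f w + sum_over X A w <= 1).
Proof.
  induction k as [|k IH]; intros Q f Hf HQ.
  - apply (event_ext (fun w => Q [] /\ f w <= 1)); [apply event_guard; auto|].
    intro w; split.
    + intros [q Hw]; exists []; unfold sum_over; simpl; split; auto; lra.
    + intros [[|i A] [q Hw]]; [|discriminate (proj1 (HQ _ q))].
      unfold sum_over in Hw; simpl in Hw; split; auto; lra.
  - apply (event_ext (fun w => exists i, (1 <= i <= n)%nat /\
        exists A, Q (i :: A) /\ (f w + X i w) + sum_over X A w <= 1)).
    + apply event_ex; auto; intro i; apply event_guard; auto; intro Hi.
      apply (IH (fun A => Q (i :: A)) (fun w => f w + X i w)).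
      * apply measurable_plus; auto.
      * intros A HA; destruct (HQ _ HA) as [HL Hin]; simpl in HL; split; [lia|].
        intros j Hj; apply Hin; simpl; auto.
    + intro w; split.
      * intros [i [Hi [A [q Hw]]]]; exists (i :: A); split; auto.
        change (sum_over X (i :: A) w) with (X i w + sum_over X A w); lra.
      * intros [[|i A] [q Hw]]; [discriminate (proj1 (HQ _ q))|].
        exists i; split; [apply (proj2 (HQ _ q)); simpl; auto|].
        exists A; split; auto.
        change (sum_over X (i :: A) w) with (X i w + sum_over X A w) in Hw; lra.
Qed.

Lemma event_max_card_ge (k : nat) : F (max_card_ge n X k).
Proof.
  apply (event_ext (fun w => exists A,
    (subset_of_range n A /\ length A = k) /\ 0 + sum_over X A w <= 1)).
  - apply (event_exists_list_sum_le k); [apply measurable_const|].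
    intros A [[_ H1] H2]; auto.
  - intro w; unfold max_card_ge; split.
    + intros [A [[H1 H2] H3]]; exists A; split; [|split]; auto; lra.
    + intros [A [H1 [H2 H3]]]; exists A; split; [split|]; auto; lra.
Qed.

Lemma event_max_card_eq (k : nat) : F (max_card_eq n X k).
Proof. apply event_and, event_compl; auto; apply event_max_card_ge. Qed.

End Measurability.

Definition indicator {Omega : Type} (E : Omega -> Prop) (w : Omega) : R :=
  if excluded_middle_informative (E w) then 1 else 0.

Lemma indicator_bounds {Omega : Type} (E : Omega -> Prop) w : 0 <= indicator E w <= 1.
Proof. unfold indicator; destruct (excluded_middle_informative (E w)); lra. Qed.

(* A simple function is a list of (coefficient, event) pairs; [sfun_mean P L G] is
   its integral over the event [G]. *)
Definition sfun_eval {Omega : Type} (L : list (R * (Omega -> Prop))) (w : Omega) : R :=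
  fold_right (fun p s => fst p * indicator (snd p) w + s) 0 L.

Definition sfun_mean {Omega : Type} (P : (Omega -> Prop) -> R)
    (L : list (R * (Omega -> Prop))) (G : Omega -> Prop) : R :=
  fold_right (fun p s => fst p * P (fun w => snd p w /\ G w) + s) 0 L.

Lemma sfun_eval_app {Omega : Type} (L1 L2 : list (R * (Omega -> Prop))) w :
  sfun_eval (L1 ++ L2) w = sfun_eval L1 w + sfun_eval L2 w.
Proof. induction L1 as [|p L1 IH]; unfold sfun_eval in *; simpl; [|rewrite IH]; ring. Qed.

Lemma sfun_mean_app {Omega : Type} P (L1 L2 : list (R * (Omega -> Prop))) G :
  sfun_mean P (L1 ++ L2) G = sfun_mean P L1 G + sfun_mean P L2 G.
Proof. induction L1 as [|p L1 IH]; unfold sfun_mean in *; simpl; [|rewrite IH]; ring. Qed.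

Section SimpleFunctions.

Context {Omega : Type} {F : (Omega -> Prop) -> Prop} {P : (Omega -> Prop) -> R}
  (HP : prob_space F P).

Let HF : sigma_algebra F := proj1 HP.

Lemma sfun_mean_split (L : list (R * (Omega -> Prop))) {G D : Omega -> Prop} :
  Forall (fun p => F (snd p)) L -> F G -> F D ->
  sfun_mean P L G = sfun_mean P L (fun w => G w /\ D w) + sfun_mean P L (fun w => G w /\ ~ D w).
Proof.
  intros HL HG HD.
  induction HL as [|[d E] L HE HL IH]; unfold sfun_mean in *; simpl in *; [ring|].
  rewrite IH, (prob_split HP (event_and HF HE HG) HD).
  rewrite (pred_ext (fun w => (E w /\ G w) /\ D w) (fun w => E w /\ G w /\ D w)) by (intro; tauto).
  rewrite (pred_ext (fun w => (E w /\ G w) /\ ~ D w) (fun w => E w /\ G w /\ ~ D w))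
    by (intro; tauto).
  ring.
Qed.

(* Split [G] along each event of [L] in turn; [c] accumulates the coefficients of the
   events already known to hold. *)
Lemma sfun_mean_nonneg (L : list (R * (Omega -> Prop))) :
  Forall (fun p => F (snd p)) L ->
  forall c G, F G -> (forall w, G w -> 0 <= c + sfun_eval L w) ->
  0 <= c * P G + sfun_mean P L G.
Proof.
  intro HL; induction HL as [|[d D] L HD HL IH]; intros c G HG Hw.
  - unfold sfun_mean; simpl.
    destruct (classic (exists w, G w)) as [[w g]|Hn].
    + specialize (Hw w g); unfold sfun_eval in Hw; simpl in Hw.
      pose proof (prob_ge0 HP HG); nra.
    + rewrite (pred_ext G (fun _ => False)) by (intro w; split; [intro g; apply Hn; eauto | tauto]).
      rewrite (prob_False HP); lra.
  - simpl in HD.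
    change (sfun_mean P ((d, D) :: L) G) with
      (d * P (fun w => D w /\ G w) + sfun_mean P L G).
    rewrite (pred_ext (fun w => D w /\ G w) (fun w => G w /\ D w)) by (intro; tauto).
    rewrite (sfun_mean_split L HL HG HD), (prob_split HP HG HD).
    assert (0 <= (c + d) * P (fun w => G w /\ D w) + sfun_mean P L (fun w => G w /\ D w)).
    { apply IH; [apply event_and; auto|].
      intros w [g dw]; specialize (Hw w g); unfold sfun_eval in Hw; simpl in Hw.
      unfold indicator at 1 in Hw; destruct (excluded_middle_informative (D w)); [|tauto].
      unfold sfun_eval; lra. }
    assert (0 <= c * P (fun w => G w /\ ~ D w) + sfun_mean P L (fun w => G w /\ ~ D w)).
    { apply IH; [apply event_and, event_compl; auto|].
      intros w [g dw]; specialize (Hw w g); unfold sfun_eval in Hw; simpl in Hw.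
      unfold indicator at 1 in Hw; destruct (excluded_middle_informative (D w)); [tauto|].
      unfold sfun_eval; lra. }
    lra.
Qed.

End SimpleFunctions.

Fixpoint range_sum (g : nat -> R) (m : nat) : R :=
  match m with O => 0 | S m' => range_sum g m' + g (S m') end.

Fixpoint range_concat {T : Type} (L : nat -> list T) (m : nat) : list T :=
  match m with O => [] | S m' => range_concat L m' ++ L (S m') end.

Lemma range_sum_scale (a : R) (g : nat -> R) m :
  range_sum (fun i => a * g i) m = a * range_sum g m.
Proof. induction m as [|m IH]; simpl; [|rewrite IH]; ring. Qed.

Lemma range_sum_nonneg (g : nat -> R) m : (forall i, 0 <= g i) -> 0 <= range_sum g m.
Proof. intro Hg; induction m as [|m IH]; simpl; [lra|]; pose proof (Hg (S m)); lra. Qed.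

Lemma range_sum_le_mono (g : nat -> R) m k :
  (forall i, 0 <= g i) -> (m <= k)%nat -> range_sum g m <= range_sum g k.
Proof. intros Hg; induction 1; simpl; [lra|]; pose proof (Hg (S m0)); lra. Qed.

Lemma range_sum_ext_in (g h : nat -> R) m :
  (forall i, (1 <= i <= m)%nat -> g i = h i) -> range_sum g m = range_sum h m.
Proof.
  induction m as [|m IH]; intro Hgh; simpl; [reflexivity|].
  rewrite IH by (intros; apply Hgh; lia); rewrite Hgh by lia; reflexivity.
Qed.

Lemma sfun_eval_range_concat {Omega : Type} (L : nat -> list (R * (Omega -> Prop))) m w :
  sfun_eval (range_concat L m) w = range_sum (fun i => sfun_eval (L i) w) m.
Proof. induction m as [|m IH]; simpl; [reflexivity|]; rewrite sfun_eval_app, IH; reflexivity. Qed.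

Lemma sfun_mean_range_concat {Omega : Type} P (L : nat -> list (R * (Omega -> Prop))) m G :
  sfun_mean P (range_concat L m) G = range_sum (fun i => sfun_mean P (L i) G) m.
Proof. induction m as [|m IH]; simpl; [reflexivity|]; rewrite sfun_mean_app, IH; reflexivity. Qed.

Definition index_sum (g : nat -> R) (A : list nat) : R := fold_right (fun i s => g i + s) 0 A.

Lemma index_sum_app g A B : index_sum g (A ++ B) = index_sum g A + index_sum g B.
Proof. induction A as [|a A IH]; unfold index_sum in *; simpl; [|rewrite IH]; ring. Qed.

Lemma index_sum_le_range_sum (g : nat -> R) (m : nat) (A : list nat) :
  (forall i, 0 <= g i) -> NoDup A -> (forall i, In i A -> (1 <= i <= m)%nat) ->
  index_sum g A <= range_sum g m.
Proof.
  intro Hg; revert A; induction m as [|m IH]; intros A HA Hin; simpl.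
  - destruct A as [|a A]; [unfold index_sum; simpl; lra|].
    specialize (Hin a (or_introl eq_refl)); lia.
  - pose proof (Hg (S m)).
    destruct (in_dec Nat.eq_dec (S m) A) as [Hi|Hi].
    + destruct (in_split _ _ Hi) as [l1 [l2 ->]].
      assert (Hl := IH (l1 ++ l2) (NoDup_remove_1 _ _ _ HA)).
      pose proof (NoDup_remove_2 _ _ _ HA) as Hn.
      rewrite index_sum_app in *; simpl; unfold index_sum at 2; simpl.
      fold (index_sum g l2).
      enough (index_sum g l1 + index_sum g l2 <= range_sum g m) by lra.
      apply Hl; intros i Hi'.
      assert (Hi2 : In i (l1 ++ S m :: l2)).
      { apply in_app_or in Hi'; apply in_or_app; destruct Hi'; [left | right; right]; auto. }
      specialize (Hin i Hi2); assert (i <> S m) by (intro; subst; auto); lia.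
    + enough (index_sum g A <= range_sum g m) by lra.
      apply IH; auto; intros i Hi'.
      specialize (Hin i Hi'); assert (i <> S m) by (intro; subst; auto); lia.
Qed.

Lemma harmonic_range_sum m : harmonic (S m) = range_sum (fun i => / INR i) (S m).
Proof.
  induction m as [|m IH]; [unfold harmonic; simpl; ring|].
  unfold harmonic in *; simpl pred in *; rewrite tech5, IH; reflexivity.
Qed.

Lemma two_le_harmonic n : (4 <= n)%nat -> 2 <= harmonic n.
Proof.
  intro Hn; destruct n as [|n]; [lia|]; rewrite harmonic_range_sum.
  assert (Hpos : forall i, 0 <= / INR i).
  { intros [|i]; [simpl; rewrite Rinv_0; lra|].
    left; apply Rinv_0_lt_compat, lt_0_INR; lia. }
  pose proof (range_sum_le_mono _ 4 (S n) Hpos Hn).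
  enough (2 <= range_sum (fun i => / INR i) 4) by lra.
  simpl; lra.
Qed.

Lemma le_of_le_add_div_nat (x y a : R) :
  (forall N, (0 < N)%nat -> x <= y + a / INR N) -> x <= y.
Proof.
  intro H; apply Rnot_lt_le; intro Hlt.
  destruct (INR_unbounded (Rabs a / (x - y))) as [N HN].
  assert (Hq : 0 <= Rabs a / (x - y)) by (apply Rle_mult_inv_pos; [apply Rabs_pos | lra]).
  assert (HN0 : (0 < N)%nat) by (destruct N; [simpl in HN; lra | lia]).
  assert (HNr : 0 < INR N) by (apply lt_0_INR; auto).
  assert (Ha : Rabs a < INR N * (x - y)).
  { apply Rmult_gt_compat_r with (r := x - y) in HN; [|lra].
    replace (Rabs a / (x - y) * (x - y)) with (Rabs a) in HN by (field; lra); lra. }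
  assert (a / INR N < x - y).
  { apply Rmult_lt_reg_r with (INR N); auto; unfold Rdiv.
    rewrite Rmult_assoc, Rinv_l, Rmult_1_r by lra; pose proof (Rle_abs a); lra. }
  specialize (H N HN0); lra.
Qed.

Definition all_pos {Omega : Type} (n : nat) (X : nat -> Omega -> R) (w : Omega) : Prop :=
  forall i, (1 <= i <= n)%nat -> 0 < X i w.

Section MaxCard.

Context {Omega : Type} {n : nat} {X : nat -> Omega -> R} {w : Omega} (Hpos : all_pos n X w).

Lemma max_card_ge_pred k : max_card_ge n X (S k) w -> max_card_ge n X k w.
Proof.
  intros [[|a A] [[HA Hin] [HL Hs]]]; [discriminate|].
  exists A; inversion HA; subst; split; [split|split]; auto.
  - intros i Hi; apply Hin; simpl; auto.
  - change (sum_over X (a :: A) w) with (X a w + sum_over X A w) in Hs.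
    pose proof (Hpos a (Hin a (or_introl eq_refl))); lra.
Qed.

Lemma max_card_ge_le j k : (j <= k)%nat -> max_card_ge n X k w -> max_card_ge n X j w.
Proof. induction 1; auto; intro Hk; apply IHle, max_card_ge_pred, Hk. Qed.

Lemma max_card_eq_unique k k' : max_card_eq n X k w -> max_card_eq n X k' w -> k = k'.
Proof.
  intros [H1 H2] [H3 H4].
  destruct (Nat.lt_total k k') as [Hl|[Hl|Hl]]; auto; exfalso.
  - apply H2, (max_card_ge_le _ k'); auto.
  - apply H4, (max_card_ge_le _ k); auto.
Qed.

End MaxCard.

Section IndicatorSums.

Context {Omega : Type} (E : nat -> Omega -> Prop) (w : Omega).

Lemma sum_indicator_none m :
  (forall k, (k <= m)%nat -> ~ E k w) -> sum_f_R0 (fun k => INR k * indicator (E k) w) m = 0.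
Proof.
  induction m as [|m IH]; intro H; [simpl; ring|].
  rewrite tech5, IH by (intros; apply H; lia); unfold indicator.
  destruct (excluded_middle_informative (E (S m) w)) as [e|]; [destruct (H (S m) (le_n _) e)|ring].
Qed.

Lemma sum_indicator_le m B :
  (forall k k', E k w -> E k' w -> k = k') -> (forall k, (k <= m)%nat -> E k w -> INR k <= B) ->
  0 <= B -> sum_f_R0 (fun k => INR k * indicator (E k) w) m <= B.
Proof.
  intros Hu; induction m as [|m IH]; intros Hb HB; [simpl; rewrite Rmult_0_l; lra|].
  rewrite tech5; unfold indicator at 2.
  destruct (excluded_middle_informative (E (S m) w)) as [e|].
  - rewrite sum_indicator_none by (intros k Hk Ek; specialize (Hu _ _ Ek e); lia).
    specialize (Hb (S m) (le_n _) e); lra.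
  - enough (sum_f_R0 (fun k => INR k * indicator (E k) w) m <= B) by lra.
    apply IH; auto.
Qed.

End IndicatorSums.

(* [sfun_eval (staircase X c N i N) w = (1/N) #{j <= N | X i w <= j/(cN)}], a step
   function dominating (1 - c X_i)_+. *)
Fixpoint staircase {Omega : Type} (X : nat -> Omega -> R) (c : R) (N i J : nat)
    : list (R * (Omega -> Prop)) :=
  match J with
  | O => []
  | S j => (/ INR N, fun w => X i w <= INR (S j) / (c * INR N)) :: staircase X c N i j
  end.

Definition staircases {Omega : Type} (X : nat -> Omega -> R) (c : R) (N m : nat)
    : list (R * (Omega -> Prop)) :=
  range_concat (fun i => staircase X c N i N) m.

Section Staircase.

Context {Omega : Type} (X : nat -> Omega -> R) (c : R) (N : nat) (HN : (0 < N)%nat).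

Lemma staircase_eval_nonneg i J w : 0 <= sfun_eval (staircase X c N i J) w.
Proof.
  assert (0 < / INR N) by (apply Rinv_0_lt_compat, lt_0_INR; auto).
  induction J as [|J IH]; [unfold sfun_eval; simpl; lra|].
  change (sfun_eval (staircase X c N i (S J)) w) with
    (/ INR N * indicator (fun w => X i w <= INR (S J) / (c * INR N)) w
     + sfun_eval (staircase X c N i J) w).
  pose proof (indicator_bounds (fun w => X i w <= INR (S J) / (c * INR N)) w); nra.
Qed.

Hypothesis Hc : 0 < c.

Lemma staircase_eval_lower i w J :
  0 < X i w -> INR J <= INR N * sfun_eval (staircase X c N i J) w + c * INR N * X i w.
Proof.
  intro Hx; assert (HNr : 0 < INR N) by (apply lt_0_INR; auto).
  induction J as [|J IH].
  - unfold sfun_eval; simpl; pose proof (Rmult_lt_0_compat _ _ Hc HNr); nra.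
  - change (sfun_eval (staircase X c N i (S J)) w) with
      (/ INR N * indicator (fun w => X i w <= INR (S J) / (c * INR N)) w
       + sfun_eval (staircase X c N i J) w).
    unfold indicator; destruct (excluded_middle_informative _) as [H|H].
    + rewrite S_INR.
      replace (INR N * (/ INR N * 1 + sfun_eval (staircase X c N i J) w))
        with (1 + INR N * sfun_eval (staircase X c N i J) w) by (field; lra); lra.
    + apply Rnot_le_lt in H; pose proof (staircase_eval_nonneg i J w).
      apply Rmult_lt_compat_r with (r := c * INR N) in H; [|nra].
      replace (INR (S J) / (c * INR N) * (c * INR N)) with (INR (S J)) in H by (field; nra).
      nra.
Qed.

Lemma one_le_staircase_eval i w : 0 < X i w -> 1 <= sfun_eval (staircase X c N i N) w + c * X i w.
Proof.
  intro Hx; pose proof (staircase_eval_lower i w N Hx).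
  assert (HNr : 0 < INR N) by (apply lt_0_INR; auto).
  apply Rmult_le_reg_l with (INR N); nra.
Qed.

Lemma length_le_staircases w A :
  (forall i, In i A -> 0 < X i w) ->
  INR (length A) <= index_sum (fun i => sfun_eval (staircase X c N i N) w) A + c * sum_over X A w.
Proof.
  induction A as [|a A IH]; intro Hp; [unfold index_sum, sum_over; simpl; lra|].
  change (length (a :: A)) with (S (length A)); rewrite S_INR.
  change (sum_over X (a :: A) w) with (X a w + sum_over X A w).
  unfold index_sum; simpl; fold (index_sum (fun i => sfun_eval (staircase X c N i N) w) A).
  pose proof (one_le_staircase_eval a w (Hp a (or_introl eq_refl))).
  assert (INR (length A) <= index_sum (fun i => sfun_eval (staircase X c N i N) w) A
                            + c * sum_over X A w) by (apply IH; intros; apply Hp; simpl; auto).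
  lra.
Qed.

Lemma max_card_le_staircases n w k :
  all_pos n X w -> max_card_eq n X k w -> INR k <= c + sfun_eval (staircases X c N n) w.
Proof.
  intros Hpos [[A [[HA Hin] [<- Hs]]] _].
  unfold staircases; rewrite sfun_eval_range_concat.
  pose proof (length_le_staircases w A (fun i Hi => Hpos i (Hin i Hi))).
  pose proof (index_sum_le_range_sum (fun i => sfun_eval (staircase X c N i N) w) n A
                (fun i => staircase_eval_nonneg i N w) HA Hin).
  nra.
Qed.

End Staircase.

Fixpoint neg_max_card_sfun {Omega : Type} (n : nat) (X : nat -> Omega -> R) (m : nat)
    : list (R * (Omega -> Prop)) :=
  match m with
  | O => [(0, max_card_eq n X 0)]
  | S m' => (- INR (S m'), max_card_eq n X (S m')) :: neg_max_card_sfun n X m'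
  end.

Lemma sfun_eval_neg_max_card {Omega : Type} n (X : nat -> Omega -> R) m w :
  sfun_eval (neg_max_card_sfun n X m) w
  = - sum_f_R0 (fun k => INR k * indicator (max_card_eq n X k) w) m.
Proof.
  induction m as [|m IH]; unfold sfun_eval in *; simpl in *; [ring|].
  rewrite IH; destruct m; simpl; ring.
Qed.

Section Expectations.

Context {Omega : Type} {F : (Omega -> Prop) -> Prop} {P : (Omega -> Prop) -> R}
  (HP : prob_space F P) {n : nat} {X : nat -> Omega -> R}
  (HU : forall i, (1 <= i <= n)%nat -> uniform_on F P (X i) (INR i)).

Let HF : sigma_algebra F := proj1 HP.
Let HX : forall i, (1 <= i <= n)%nat -> measurable F (X i) := fun i Hi t => proj1 (HU i Hi t).

Lemma all_pos_as m :
  (m <= n)%nat -> F (all_pos m X) /\ P (fun w => ~ all_pos m X w) = 0.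
Proof.
  induction m as [|m IH]; intro Hm.
  - rewrite (pred_ext (fun w => ~ all_pos 0 X w) (fun _ => False)).
    + split; [apply (event_ext (fun _ => True)); [apply event_True; auto|] | apply (prob_False HP)].
      intro w; split; [intros _ i Hi; lia | tauto].
    + intro w; split; [intro H; apply H; intros i Hi; lia | tauto].
  - destruct (IH ltac:(lia)) as [HF1 HP1].
    destruct (HU (S m) ltac:(lia) 0) as [HF2 HP2].
    assert (Hnull : P (fun w => X (S m) w <= 0) = 0).
    { rewrite HP2; unfold Rdiv; rewrite Rmult_0_l, Rmax_left, Rmin_right; lra. }
    assert (Hsplit : forall w, all_pos (S m) X w <-> all_pos m X w /\ ~ X (S m) w <= 0).
    { intro w; split.
      - intro H; split; [intros i Hi; apply H; lia | pose proof (H (S m) ltac:(lia)); lra].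
      - intros [H Hx] i Hi; destruct (Nat.eq_dec i (S m)) as [->|]; [lra | apply H; lia]. }
    split.
    { apply (event_ext _ (event_and HF HF1 (event_compl HF HF2))).
      intro w; symmetry; apply Hsplit. }
    rewrite (pred_ext _ (fun w => ~ all_pos m X w \/ X (S m) w <= 0))
      by (intro w; rewrite Hsplit; tauto).
    pose proof (prob_or_le HP (event_compl HF HF1) HF2).
    pose proof (prob_ge0 HP (event_or HF (event_compl HF HF1) HF2)); lra.
Qed.

Section AlmostSure.

Context {G : Omega -> Prop} (HG : F G) (H0 : P (fun w => ~ G w) = 0).

Lemma sfun_mean_neg_max_card m :
  sfun_mean P (neg_max_card_sfun n X m) G
  = - sum_f_R0 (fun k => INR k * P (max_card_eq n X k)) m.
Proof.
  induction m as [|m IH]; unfold sfun_mean in *; cbn [neg_max_card_sfun fold_right fst snd];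
    rewrite (prob_and_as HP (event_max_card_eq HF HX _) HG H0).
  - simpl; ring.
  - rewrite IH, tech5; ring.
Qed.

Context {c : R} (Hc : 1 <= c) {N : nat} (HN : (0 < N)%nat).

(* Since j/(cN) <= 1/c <= 1 <= i, every threshold lies in [0, i], where P(X_i <= t) = t/i. *)
Lemma staircase_mean i J :
  (1 <= i <= n)%nat -> (J <= N)%nat ->
  sfun_mean P (staircase X c N i J) G = INR J * (INR J + 1) / (2 * c * INR N * INR N * INR i).
Proof.
  intro Hi; assert (HNr : 0 < INR N) by (apply lt_0_INR; auto).
  assert (Hir : 1 <= INR i) by (apply (le_INR 1); lia).
  induction J as [|J IH]; intro HJ; [unfold sfun_mean; simpl; field; repeat split; lra|].
  change (sfun_mean P (staircase X c N i (S J)) G) with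
    (/ INR N * P (fun w => X i w <= INR (S J) / (c * INR N) /\ G w)
     + sfun_mean P (staircase X c N i J) G).
  rewrite IH by lia; destruct (HU i Hi (INR (S J) / (c * INR N))) as [HFt HPt].
  rewrite (prob_and_as HP HFt HG H0), HPt.
  assert (HSJ : INR (S J) <= INR N) by (apply le_INR; auto).
  assert (Hpos : 0 < c * INR N * INR i)
    by (apply Rmult_lt_0_compat; [apply Rmult_lt_0_compat|]; lra).
  replace (INR (S J) / (c * INR N) / INR i) with (INR (S J) / (c * INR N * INR i))
    by (field; repeat split; lra).
  assert (Ht0 : 0 <= INR (S J) / (c * INR N * INR i))
    by (apply Rle_mult_inv_pos; [apply pos_INR | lra]).
  assert (Ht1 : INR (S J) / (c * INR N * INR i) <= 1).
  { apply Rmult_le_reg_r with (c * INR N * INR i); auto; unfold Rdiv.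
    rewrite Rmult_assoc, Rinv_l, Rmult_1_r by lra.
    assert (INR N <= c * INR N) by nra; assert (c * INR N <= c * INR N * INR i) by nra; lra. }
  rewrite Rmax_right, Rmin_right by auto.
  rewrite S_INR; field; repeat split; lra.
Qed.

Lemma staircases_mean :
  sfun_mean P (staircases X c N n) G
  = (INR N + 1) / (2 * c * INR N) * range_sum (fun i => / INR i) n.
Proof.
  assert (HNr : 0 < INR N) by (apply lt_0_INR; auto).
  unfold staircases; rewrite sfun_mean_range_concat, <- range_sum_scale.
  apply range_sum_ext_in; intros i Hi.
  assert (0 < INR i) by (apply lt_0_INR; lia).
  rewrite staircase_mean by auto; field; repeat split; lra.
Qed.

End AlmostSure.
End Expectations.

Section Bound.

Context {Omega : Type} {F : (Omega -> Prop) -> Prop} {P : (Omega -> Prop) -> R}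
  (HP : prob_space F P) {n : nat} {X : nat -> Omega -> R}
  (HU : forall i, (1 <= i <= n)%nat -> uniform_on F P (X i) (INR i)).

Let HF : sigma_algebra F := proj1 HP.
Let HX : forall i, (1 <= i <= n)%nat -> measurable F (X i) := fun i Hi t => proj1 (HU i Hi t).

Lemma events_neg_max_card_sfun m : Forall (fun p => F (snd p)) (neg_max_card_sfun n X m).
Proof. induction m; simpl; constructor; auto; apply event_max_card_eq; auto. Qed.

Lemma events_staircase c N i J :
  (1 <= i <= n)%nat -> Forall (fun p => F (snd p)) (staircase X c N i J).
Proof. intro Hi; induction J; simpl; constructor; auto; apply HX; auto. Qed.

Lemma events_staircases c N m : (m <= n)%nat -> Forall (fun p => F (snd p)) (staircases X c N m).
Proof.
  unfold staircases; induction m as [|m IH]; intro Hm; simpl; [constructor|].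
  apply Forall_app; split; [apply IH | apply events_staircase]; lia.
Qed.

Lemma expected_max_card_le_staircase (c : R) (N : nat) :
  1 <= c -> (0 < N)%nat ->
  expected_max_card P n X <= c + (INR N + 1) / (2 * c * INR N) * range_sum (fun i => / INR i) n.
Proof.
  intros Hc HN.
  destruct (all_pos_as HP HU n (le_n n)) as [HG H0].
  assert (HPG : P (all_pos n X) = 1).
  { rewrite <- (proj1 (proj2 (proj2 HP))), <- (prob_and_as HP (event_True HF) HG H0).
    f_equal; apply pred_ext; tauto. }
  assert (Hpw : forall w, all_pos n X w ->
            0 <= c + sfun_eval (neg_max_card_sfun n X n ++ staircases X c N n) w).
  { intros w Hw; rewrite sfun_eval_app, sfun_eval_neg_max_card.
    enough (sum_f_R0 (fun k => INR k * indicator (max_card_eq n X k) w) n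
            <= c + sfun_eval (staircases X c N n) w) by lra.
    apply sum_indicator_le.
    - intros k k'; apply (max_card_eq_unique Hw).
    - intros k _; apply (max_card_le_staircases X c N HN ltac:(lra) n w k Hw).
    - unfold staircases; rewrite sfun_eval_range_concat.
      pose proof (range_sum_nonneg _ n (fun i => staircase_eval_nonneg X c N HN i N w)); lra. }
  pose proof (sfun_mean_nonneg HP _ (proj2 (Forall_app _ _ _) (conj (events_neg_max_card_sfun n)
                (events_staircases c N n (le_n n)))) c _ HG Hpw) as Hmean.
  rewrite sfun_mean_app, (sfun_mean_neg_max_card HP HU HG H0),
    (staircases_mean HP HU HG H0 Hc HN), HPG in Hmean.
  unfold expected_max_card; lra.
Qed.

Lemma expected_max_card_le (c : R) :
  1 <= c -> expected_max_card P n X <= c + range_sum (fun i => / INR i) n / (2 * c).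
Proof.
  intro Hc; set (h := range_sum (fun i => / INR i) n).
  apply (le_of_le_add_div_nat _ _ (h / (2 * c))); intros N HN.
  assert (0 < INR N) by (apply lt_0_INR; auto).
  replace (c + h / (2 * c) + h / (2 * c) / INR N)
    with (c + (INR N + 1) / (2 * c * INR N) * h) by (field; lra).
  apply expected_max_card_le_staircase; auto.
Qed.

End Bound.

Theorem mainTheorem5 :
  forall (Omega : Type) (F : (Omega -> Prop) -> Prop) (P : (Omega -> Prop) -> R)
         (n : nat) (X : nat -> Omega -> R),
    prob_space F P ->
    (4 <= n)%nat ->
    (forall i : nat, (1 <= i <= n)%nat -> uniform_on F P (X i) (INR i)) ->
    expected_max_card P n X <= sqrt (2 * harmonic n).
Proof.
  intros Omega F P n X HP Hn HU.
  pose proof (two_le_harmonic n Hn) as HH.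
  assert (Hsum : harmonic n = range_sum (fun i => / INR i) n)
    by (destruct n; [lia | apply harmonic_range_sum]).
  set (c := sqrt (harmonic n / 2)).
  assert (Hc1 : 1 <= c) by (unfold c; rewrite <- sqrt_1; apply sqrt_le_1_alt; lra).
  assert (Hcc : c * c = harmonic n / 2) by (apply sqrt_sqrt; lra).
  assert (Hhalf : harmonic n / (2 * c) = c)
    by (replace (harmonic n) with (2 * (c * c)) by lra; field; lra).
  assert (Hsqrt : sqrt (2 * harmonic n) = 2 * c)
    by (rewrite <- (sqrt_square (2 * c)) by lra; f_equal; nra).
  pose proof (expected_max_card_le HP HU c Hc1) as Hbound.
  rewrite <- Hsum, Hhalf in Hbound; rewrite Hsqrt; lra.
Qed.
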